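(* Let $G$ be a finite group such that every nontrivial Sylow subgroup of $G/G'$ is noncyclic, and let $N$ be a normal subgroup of $G$ such that $\eta(G) = \eta(G/N)$. Then $N \le G'$.
   Context: All groups are finite. A cyclic subgroup $C$ of a group $G$ is maximal cyclic if there is no cyclic subgroup $D$ of $G$ with $C < D$. $\eta(G)$ denotes the number of conjugacy classes of maximal cyclic subgroups of $G$. $G'$ is the derived subgroup of $G$. *)

From mathcomp Require Import all_boot all_fingroup all_solvable.
Set Implicit Arguments. Unset Strict Implicit. Unset Printing Implicit Defensive.
Local Open Scope group_scope.

Definition max_cyclic_subgroups (gT : finGroupType) (G : {set gT})
  : {set {set gT}} :=
  [set C : {set gT} | [&& C \subset G, cyclic C &
     [forall D : {set gT}, ((D \subset G) && cyclic D) ==> ~~ (C \proper D)]]].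

Definition eta (gT : finGroupType) (G : {set gT}) : nat :=
  #|[set C :^: G | C in max_cyclic_subgroups G]|.

From mathcomp Require Import all_boot all_fingroup all_solvable.
Set Implicit Arguments. Unset Strict Implicit. Unset Printing Implicit Defensive.
Local Open Scope group_scope.

(* Every maximal cyclic subgroup of G/N is the image of one of G, so the map
   C :^: G |-> (C/N) :^: (G/N) is onto; eta(G) = eta(G/N) makes it a bijection
   of conjugacy classes.  Hence, for a maximal cyclic <x> of G and m in N, a
   maximal cyclic subgroup containing x m has the same image mod N as <x> (that
   image contains the maximal (<x>N)/N), so it is conjugate to <x>; as G/G' is
   abelian, m lies in <x>G'.  Thus NG'/G' lies in every XG'/G' with X maximal
   cyclic.  If N is not in G', take a in NG'/G' of prime order p: every element
   of order p of G/G' lies in a cyclic XG'/G' together with a, so it generates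
   <a>.  The Sylow p-subgroup of the abelian group G/G' then has a unique
   subgroup of order p, so it is cyclic, and it is nontrivial as it contains a. *)

Definition max_cyclic_classes (gT : finGroupType) (G : {set gT})
  : {set {set {set gT}}} :=
  [set C :^: G | C in max_cyclic_subgroups G].

Section MaxCyclic.
Variable gT : finGroupType.
Implicit Types (G : {group gT}) (C D : {set gT}).

Lemma cyclicJs C g : cyclic (C :^ g) = cyclic C.
Proof.
have cycJ D h : cyclic D -> cyclic (D :^ h).
  by case/cyclicP=> d ->; rewrite -cycleJ cycle_cyclic.
by apply/idP/idP=> [/(cycJ _ g^-1)|/cycJ->//]; rewrite conjsgK.
Qed.

Lemma max_cyclic_subgroupsP G C : reflect
  [/\ C \subset G, cyclic C &
     forall D, D \subset G -> cyclic D -> C \subset D -> D = C]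
  (C \in max_cyclic_subgroups G).
Proof.
rewrite inE; apply: (iffP and3P) => [[sCG cC /forallP maxC]|[sCG cC maxC]].
  split=> // D sDG cD sCD; apply/eqP; rewrite eq_sym eqEproper sCD /=.
  by have := maxC D; rewrite sDG cD.
split=> //; apply/forallP => D; apply/implyP => /andP[sDG cD].
by apply/negP => /andP[sCD]; rewrite (maxC D sDG cD sCD) subxx.
Qed.

Lemma max_cyclic_subgroupsJ G C g :
  C \in max_cyclic_subgroups G -> g \in G -> C :^ g \in max_cyclic_subgroups G.
Proof.
case/max_cyclic_subgroupsP=> sCG cC maxC Gg; apply/max_cyclic_subgroupsP.
have nGg := normsP (normG G).
split; first by rewrite -(nGg g Gg) conjSg.
  by rewrite cyclicJs.
move=> D sDG cD sCgD; rewrite -(conjsgKV g D); congr (_ :^ g); apply: maxC.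
- by rewrite -(nGg g^-1) ?groupV // conjSg.
- by rewrite cyclicJs.
- by rewrite -sub_conjg.
Qed.

Lemma max_cyclic_subgroup_exists G x :
  x \in G -> exists2 C, C \in max_cyclic_subgroups G & x \in C.
Proof.
move=> Gx; pose P C := [&& C \subset G, cyclic C & x \in C].
have Px : P <[x]> by rewrite /P cycle_subG Gx cycle_cyclic cycle_id.
have [C /and3P[sCG cC xC] maxC] := arg_maxnP (fun C => #|C|) Px.
exists C => //; apply/max_cyclic_subgroupsP; split=> // D sDG cD sCD.
apply/eqP; rewrite eq_sym eqEcard sCD; apply: maxC.
by rewrite /P sDG cD (subsetP sCD).
Qed.

Lemma quotient_der1_conjg G C g :
  C \subset G -> g \in G -> C :^ g / G^`(1) = C / G^`(1).
Proof.
move=> sCG Gg; have nG'G := normal_norm (der_normal 1 G).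
rewrite quotientJ ?(subsetP nG'G) //.
have abG := sub_der1_abelian (subxx G^`(1)).
exact: (normsP (sub_abelian_norm abG (quotientS _ sCG))) _ (mem_quotient _ Gg).
Qed.

End MaxCyclic.

Section QuotientMaxCyclic.
Variables (gT : finGroupType) (G N : {group gT}).
Hypothesis nNG : G \subset 'N(N).

Lemma quotient_conjugates C :
  [set D / N | D in C :^: G] = (C / N) :^: (G / N).
Proof.
apply/setP=> K; apply/imsetP/imsetP.
  case=> _ /imsetP[g Gg ->] ->; exists (coset N g); first exact: mem_quotient.
  by rewrite quotientJ // (subsetP nNG).
case=> _ /morphimP[g Ng Gg ->] ->; exists (C :^ g); first exact: imset_f.
by rewrite quotientJ.
Qed.

Lemma max_cyclic_quotient_lift (D : {set coset_of N}) :
  D \in max_cyclic_subgroups (G / N) ->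
  exists2 C, C \in max_cyclic_subgroups G & C / N = D.
Proof.
case/max_cyclic_subgroupsP=> sDG /cyclicP[d defD] maxD.
have /morphimP[g _ Gg dE] : d \in G / N by rewrite -cycle_subG -defD.
have [C mcC gC] := max_cyclic_subgroup_exists Gg.
have [sCG /cyclicP[x defC] _] := max_cyclic_subgroupsP _ _ mcC.
exists C => //; rewrite defC in gC sCG *; apply: maxD.
- exact: quotientS.
- by rewrite quotient_cyclic ?cycle_cyclic.
- by rewrite defD dE cycle_subG mem_quotient.
Qed.

Lemma max_cyclic_classes_quotient :
  max_cyclic_classes (G / N)
    \subset [set [set D / N | D in K]
               | K : {set {set gT}} in max_cyclic_classes G].
Proof.
apply/subsetP=> _ /imsetP[D /max_cyclic_quotient_lift[C mcC <-] ->].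
apply/imsetP; exists (C :^: G); first exact: imset_f.
by rewrite quotient_conjugates.
Qed.

End QuotientMaxCyclic.

Section EtaQuotient.
Variables (gT : finGroupType) (G N : {group gT}).
Hypotheses (nsNG : N <| G) (eta_eq : eta G = eta (G / N)).

Let nNG : G \subset 'N(N) := normal_norm nsNG.
Let card_classes_eq :
  #|max_cyclic_classes G| = #|max_cyclic_classes (G / N)| := eta_eq.
Let quo (K : {set {set gT}}) := [set D / N | D in K].

Lemma quotient_max_cyclic_classes :
  max_cyclic_classes (G / N) = quo @: max_cyclic_classes G.
Proof.
apply/eqP; rewrite eqEcard max_cyclic_classes_quotient //=.
by rewrite -card_classes_eq leq_imset_card.
Qed.

Lemma quotient_max_cyclic_classes_inj :
  {in max_cyclic_classes G &, injective quo}.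
Proof.
by apply/imset_injP; rewrite -quotient_max_cyclic_classes -card_classes_eq.
Qed.

Lemma quotient_max_cyclic C :
  C \in max_cyclic_subgroups G -> C / N \in max_cyclic_subgroups (G / N).
Proof.
move=> mcC; have : quo (C :^: G) \in max_cyclic_classes (G / N).
  by rewrite quotient_max_cyclic_classes; apply/imset_f/imset_f.
rewrite /quo quotient_conjugates // => /imsetP[D mcD classCD].
have /imsetP[_ /morphimP[g _ Gg ->] ->] : C / N \in D :^: (G / N).
  by rewrite -classCD (orbit_refl 'Js).
by rewrite max_cyclic_subgroupsJ ?mem_quotient.
Qed.

Lemma max_cyclic_quotient_conjugate C D :
  C \in max_cyclic_subgroups G -> D \in max_cyclic_subgroups G ->
  C / N = D / N -> D \in C :^: G.
Proof.
move=> mcC mcD eqCD.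
have -> : C :^: G = D :^: G.
  apply: quotient_max_cyclic_classes_inj; try exact: imset_f.
  by rewrite /quo !quotient_conjugates // eqCD.
exact: (orbit_refl 'Js).
Qed.

Lemma quotient_der1_sub_max_cyclic C :
  C \in max_cyclic_subgroups G -> N / G^`(1) \subset C / G^`(1).
Proof.
move=> mcC; have [sCG /cyclicP[x defC] _] := max_cyclic_subgroupsP _ _ mcC.
subst C; have Gx : x \in G by rewrite -cycle_subG.
have nG'G := normal_norm (der_normal 1 G).
apply/subsetP=> _ /morphimP[m _ Nm ->] /=.
have Gm := subsetP (normal_sub nsNG) m Nm.
have [D mcD xmD] := max_cyclic_subgroup_exists (groupM Gx Gm).
have [sDG /cyclicP[y defD] _] := max_cyclic_subgroupsP _ _ mcD; subst D.
have eqDC : <[y]> / N = <[x]> / N.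
  have [_ _ maxCN] := max_cyclic_subgroupsP _ _ (quotient_max_cyclic mcC).
  apply: maxCN.
  - exact: quotientS.
  - by rewrite quotient_cyclic ?cycle_cyclic.
  - rewrite quotient_cycle ?(subsetP nNG) // cycle_subG.
    have -> : coset N x = coset N (x * m).
      by rewrite morphM ?(subsetP nNG) //= (coset_id Nm) mulg1.
    exact: mem_quotient.
have /imsetP[g Gg defD] := max_cyclic_quotient_conjugate mcC mcD (esym eqDC).
have xmC : coset G^`(1) (x * m) \in <[x]> / G^`(1).
  by rewrite -(quotient_der1_conjg sCG Gg) -defD mem_quotient.
have xC : coset G^`(1) x \in <[x]> / G^`(1) by rewrite mem_quotient ?cycle_id.
have -> : coset G^`(1) m = (coset G^`(1) x)^-1 * coset G^`(1) (x * m).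
  by rewrite morphM ?(subsetP nG'G) // mulKg.
by rewrite groupM ?groupV.
Qed.

Lemma der1_quotient_cyclic_cover c : c \in G / G^`(1) ->
  exists C : {group coset_of G^`(1)},
    [&& cyclic C, c \in C & N / G^`(1) \subset C].
Proof.
case/morphimP=> h _ Gh ->; have [X mcX hX] := max_cyclic_subgroup_exists Gh.
have [_ /cyclicP[x defX] _] := max_cyclic_subgroupsP _ _ mcX; subst X.
exists (<[x]> / G^`(1))%G; rewrite quotient_cyclic ?cycle_cyclic //.
by rewrite mem_quotient ?quotient_der1_sub_max_cyclic.
Qed.

End EtaQuotient.

Section CyclicPgroup.
Variables (gT : finGroupType) (p : nat) (P : {group gT}).
Hypothesis pP : p.-group P.

Lemma abelian_pgroup_cyclic_Ohm1 : abelian P -> cyclic P = cyclic 'Ohm_1(P).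
Proof.
move=> abP; rewrite abelian_rank1_cyclic // (rank_abelian_pgroup pP abP).
by rewrite (abelem_cyclic (Ohm1_abelem pP abP)).
Qed.

Lemma Ohm1_sub_cycle a : #[a] = p ->
  (forall c, c \in P ->
     exists C : {group gT}, [&& cyclic C, c \in C & a \in C]) ->
  'Ohm_1(P) \subset <[a]>.
Proof.
move=> oa cover; rewrite Ohm1Eprime gen_subG.
apply/subsetP=> c /setIdP[Pc pr_c].
have oc : #[c] = p.
  apply/eqP; apply: (pnatPpi (mem_p_elt pP Pc)).
  by rewrite mem_primes pr_c order_gt0 dvdnn.
have [C /and3P[cC Cc Ca]] := cover c Pc.
have eq_ca : <[c]> = <[a]>.
  by apply/eqP; rewrite (eq_subG_cyclic cC) ?cycle_subG // -!orderE oc oa.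
by rewrite -cycle_subG eq_ca.
Qed.

End CyclicPgroup.

Theorem theorem1p2 (gT : finGroupType) (G N : {group gT}) :
  (forall (p : nat) (P : {group coset_of G^`(1)}),
      prime p -> P \in 'Syl_p(G / G^`(1)) -> P :!=: 1 -> ~~ cyclic P) ->
  N <| G ->
  eta G = eta (G / N) ->
  N \subset G^`(1).
Proof.
move=> Sylow_noncyclic nsNG eta_eq; apply: contraT => not_sNG'.
have nG'N := subset_trans (normal_sub nsNG) (normal_norm (der_normal 1 G)).
have ntNG' : 1 < #|N / G^`(1)|.
  by rewrite ltnNge -trivg_card_le1 -subG1 quotient_sub1.
have pr_p := pdiv_prime ntNG'; set p := pdiv _ in pr_p.
have [a NG'a oa] := Cauchy pr_p (pdiv_dvd _).
have [P sylP] := Sylow_exists p (G / G^`(1)).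
have abGG' := sub_der1_abelian (subxx G^`(1)).
have sPGG' := pHall_sub sylP.
have Pa : a \in P.
  have GG'a : a \in G / G^`(1).
    by rewrite (subsetP (quotientS _ (normal_sub nsNG))).
  have nsPGG' : P <| G / G^`(1) by rewrite -sub_abelian_normal.
  by rewrite (mem_normal_Hall sylP nsPGG' GG'a) /p_elt oa pnat_id.
have ntP : P :!=: 1.
  apply: contraTneq Pa => ->.
  by rewrite inE -order_eq1 oa (gtn_eqF (prime_gt1 pr_p)).
have SylP : P \in 'Syl_p(G / G^`(1)) by rewrite inE.
case/negP: (Sylow_noncyclic p P pr_p SylP ntP).
have pP := pHall_pgroup sylP.
rewrite (abelian_pgroup_cyclic_Ohm1 pP (abelianS sPGG' abGG')).
apply: cyclicS (Ohm1_sub_cycle pP oa _) (cycle_cyclic a) => c Pc.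
have GG'c := subsetP sPGG' c Pc.
have [C /and3P[cC Cc sNC]] := der1_quotient_cyclic_cover nsNG eta_eq GG'c.
by exists C; rewrite cC Cc (subsetP sNC).
Qed.
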